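(* Let $(\mathcal S,\mathcal C,\mathcal R,\mathcal K)$ be a deterministic reaction network system with species $X_1,\dots,X_d$, modeled by $\frac{d}{dt}x(t)=f(x(t))$, and let $PS=\{x\in\mathbb R^d_{>0}: f(x)=0\}$. Let $\theta,\mu>0$ and suppose there exists $x^*\in PS$ with $x^*_1=\mu/\theta$. Then the basic ACR network system $Z+X_1\xrightarrow{\theta}2Z$, $Z\xrightarrow{\mu}X_1$ (with mass-action kinetics, $Z$ a new species not in the given network) is a mass-action ACR controller for $(\mathcal S,\mathcal C,\mathcal R,\mathcal K)$, and the controlled system admits a positive steady state.
   Context: The basic ACR network system with mass-action kinetics has equations $x_1'=-z(\theta x_1-\mu)$, $z'=z(\theta x_1-\mu)$. The controlled (union) system has equations $x_1'=f_1(x)-z(\theta x_1-\mu)$, $z'=z(\theta x_1-\mu)$, and $x_i'=f_i(x)$ for $i\ge 2$. A deterministic system is an ACR system if it admits a positive steady state and some species has the same value at every positive steady state (an ACR species). An ACR network system $(\hat{\mathcal S},\hat{\mathcal C},\hat{\mathcal R},\hat{\mathcal K})$ with $X_1\in\mathcal S\cap\hat{\mathcal S}$ and $\hat{\mathcal S}\setminus\mathcal S\ne\emptyset$ is called an ACR controller for $(\mathcal S,\mathcal C,\mathcal R,\mathcal K)$ if the union system (right-hand sides added on shared species) is an ACR network system with $X_1$ as an ACR species; it is a mass-action ACR controller if it is a mass-action system. *)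

From mathcomp Require Import all_boot all_order all_algebra.
From mathcomp Require Import reals.
Set Implicit Arguments. Unset Strict Implicit. Unset Printing Implicit Defensive.
Import Order.TTheory GRing.Theory Num.Theory.
Local Open Scope ring_scope.

Section Defs.
Variable R : realType.

Definition vfield (S : finType) := (S -> R) -> (S -> R).

Definition pos_steady (S : finType) (f : vfield S) (x : S -> R) : Prop :=
  (forall s, 0 < x s) /\ (forall s, f x s = 0).

Definition ACR_species (S : finType) (f : vfield S) (s : S) : Prop :=
  forall x y, pos_steady f x -> pos_steady f y -> x s = y s.

Definition ACR_system (S : finType) (f : vfield S) : Prop :=
  (exists x, pos_steady f x) /\ (exists s, ACR_species f s).

Record reaction (S : finType) := Reaction {
  rsrc : S -> nat; rprd : S -> nat; rrate : R }.

Definition mass_action (S : finType) (rs : seq (reaction S)) : vfield S :=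
  fun x s => \sum_(r <- rs)
     rrate r * (\prod_(s' : S) x s' ^+ rsrc r s') *
     ((rprd r s)%:R - (rsrc r s)%:R).

(* Union of the given system f (species 'I_d.+1, X_1 = ord0) with a
   controller g on species T, embedded in the union species option 'I_d.+1
   via emb (None = a new species not in the original network). *)
Definition union_vf (d : nat) (T : finType) (f : vfield 'I_d.+1)
  (g : vfield T) (emb : T -> option 'I_d.+1) : vfield (option 'I_d.+1) :=
  fun x s =>
    (match s with Some i => f (fun j => x (Some j)) i | None => 0 end) +
    \sum_(c : T | emb c == s) g (fun c' => x (emb c')) c.

Definition ACR_controller (d : nat) (T : finType) (f : vfield 'I_d.+1)
  (g : vfield T) (emb : T -> option 'I_d.+1) : Prop :=
  injective emb /\
  (exists c, emb c = Some ord0) /\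
  (exists c, emb c = None) /\
  ACR_system g /\
  ACR_system (union_vf f g emb) /\
  ACR_species (union_vf f g emb) (Some ord0).

Definition mass_action_ACR_controller (d : nat) (T : finType)
  (f : vfield 'I_d.+1) (rs : seq (reaction T))
  (emb : T -> option 'I_d.+1) : Prop :=
  ACR_controller f (mass_action rs) emb.

(* Basic ACR network on species bool: true = X_1, false = Z.
   Z + X_1 --theta--> 2Z,   Z --mu--> X_1. *)
Definition basic_network (theta mu : R) : seq (reaction bool) :=
  [:: Reaction (fun _ => 1%N) (fun s => if s then 0%N else 2%N) theta;
      Reaction (fun s => if s then 0%N else 1%N) (fun s => if s then 1%N else 0%N) mu].

End Defs.

Definition basic_emb (d : nat) (c : bool) : option 'I_d.+1 :=
  if c then Some ord0 else None.

From mathcomp Require Import all_boot all_order all_algebra.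
From mathcomp Require Import reals.
From mathcomp Require Import ring.
Set Implicit Arguments. Unset Strict Implicit. Unset Printing Implicit Defensive.
Import Order.TTheory GRing.Theory Num.Theory.
Local Open Scope ring_scope.

(* The controller species Z obeys z' = z (theta x_1 - mu), so at a positive
   steady state (z > 0) it pins x_1 to the set point mu / theta, whatever the
   controlled network does.  Conversely, at a steady state x* of the network
   with x*_1 = mu / theta both controller terms vanish, so x* together with
   any z > 0 is a positive steady state of the controlled system. *)

Lemma ACR_species_of_const (R : realType) (S : finType) (f : vfield R S)
    (s : S) (c : R) :
  (forall x, pos_steady f x -> x s = c) -> ACR_species f s.
Proof. by move=> fix_s x y /fix_s -> /fix_s ->. Qed.

Lemma basic_emb_inj (d : nat) : injective (@basic_emb d).
Proof. by case=> [] []. Qed.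

Section BasicController.

Variables (R : realType) (theta mu : R).
Hypotheses (theta_gt0 : 0 < theta) (mu_gt0 : 0 < mu).

Local Notation basic := (mass_action (basic_network theta mu)).

Lemma mass_action_basicE (x : bool -> R) (s : bool) :
  basic x s = (if s then -1 else 1) * (x false * (theta * x true - mu)).
Proof.
rewrite /mass_action !big_cons big_nil /= !big_bool /=.
by case: s; rewrite /= ?expr1 ?expr0; ring.
Qed.

Lemma setpoint_eq0 : theta * (mu / theta) - mu = 0.
Proof. by rewrite mulrC divfK ?subrr ?gt_eqF. Qed.

Lemma setpoint_of_eq0 (z x1 : R) :
  0 < z -> z * (theta * x1 - mu) = 0 -> x1 = mu / theta.
Proof.
move=> z_gt0 /eqP; rewrite mulf_eq0 gt_eqF //= subr_eq0 => /eqP <-.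
by rewrite mulrC mulKf ?gt_eqF.
Qed.

Lemma basic_pos_steady : pos_steady basic (fun b => if b then mu / theta else 1).
Proof.
split=> [[]|s]; last by rewrite mass_action_basicE /= setpoint_eq0 !mulr0.
  by rewrite divr_gt0.
exact: ltr01.
Qed.

Lemma basic_steady_setpoint (x : bool -> R) : pos_steady basic x -> x true = mu / theta.
Proof.
by case=> x_gt0 /(_ false); rewrite mass_action_basicE mul1r; apply: setpoint_of_eq0.
Qed.

Lemma basic_ACR_system : ACR_system basic.
Proof.
split; first by exists (fun b => if b then mu / theta else 1); exact: basic_pos_steady.
by exists true; apply: ACR_species_of_const basic_steady_setpoint.
Qed.

Variables (d : nat) (f : vfield R 'I_d.+1).

Local Notation controlled := (union_vf f basic (@basic_emb d)).

Lemma controlledE_Some (x : option 'I_d.+1 -> R) (i : 'I_d.+1) :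
  controlled x (Some i) =
  f (fun j => x (Some j)) i -
  (if i == ord0 then x None * (theta * x (Some ord0) - mu) else 0).
Proof.
rewrite /union_vf big_mkcond big_bool /= !mass_action_basicE /=.
rewrite (inj_eq (@Some_inj _)) [ord0 == i]eq_sym.
by case: (i == ord0); ring.
Qed.

Lemma controlledE_None (x : option 'I_d.+1 -> R) :
  controlled x None = x None * (theta * x (Some ord0) - mu).
Proof. by rewrite /union_vf big_mkcond big_bool /= !mass_action_basicE /=; ring. Qed.

Lemma controlled_steady_setpoint (x : option 'I_d.+1 -> R) :
  pos_steady controlled x -> x (Some ord0) = mu / theta.
Proof.
by case=> x_gt0 /(_ None); rewrite controlledE_None; apply: setpoint_of_eq0.
Qed.

Lemma controlled_pos_steady (xs : 'I_d.+1 -> R) (z : R) :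
  pos_steady f xs -> xs ord0 = mu / theta -> 0 < z ->
  pos_steady controlled (fun o => if o is Some j then xs j else z).
Proof.
move=> [xs_gt0 f_xs] xs_set z_gt0; split=> [[j|] //|[i|]].
- by rewrite controlledE_Some /= xs_set setpoint_eq0 mulr0 f_xs if_same subr0.
- by rewrite controlledE_None /= xs_set setpoint_eq0 mulr0.
Qed.

End BasicController.

Theorem mainTheorem2 (R : realType) (d : nat)
  (f : vfield R 'I_d.+1) (theta mu : R) :
  0 < theta -> 0 < mu ->
  (exists xs : 'I_d.+1 -> R, pos_steady f xs /\ xs ord0 = mu / theta) ->
  mass_action_ACR_controller f (basic_network theta mu) (@basic_emb d) /\
  (exists x, pos_steady (union_vf f (mass_action (basic_network theta mu)) (@basic_emb d)) x).
Proof.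
move=> theta_gt0 mu_gt0 [xs [steady_xs xs_set]].
have steady_union := controlled_pos_steady theta_gt0 steady_xs xs_set ltr01.
have ACR_X1 := ACR_species_of_const (controlled_steady_setpoint theta_gt0 (f := f)).
split; last by eexists; exact: steady_union.
split; first exact: basic_emb_inj.
split; first by exists true.
split; first by exists false.
split; first exact: basic_ACR_system.
by split=> //; split; [eexists; exact: steady_union | exists (Some ord0)].
Qed.
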